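(* Let $\mathcal G=\mathfrak g_1\oplus\mathfrak g_2$ and $\Theta\in C^1_{\mathsf{LTS}}(\mathcal G,\mathcal G)$ with decomposition $\Theta=\hat\phi_1+\hat\mu_1+\hat\psi+\hat\mu_2+\hat\phi_2$ in which $\hat\phi_1=\hat\phi_2=0$. Then $(\mathcal G,\Theta)$ is a Lie triple system (so that $(\mathcal G,\mathfrak g_1,\mathfrak g_2)$ is a twilled Lie triple system) if and only if $\frac12[\hat\mu_1,\hat\mu_1]_{\mathsf{LTS}}=0$, $[\hat\psi,\hat\mu_1]_{\mathsf{LTS}}=0$, $[\hat\mu_1,\hat\mu_2]_{\mathsf{LTS}}+\frac12[\hat\psi,\hat\psi]_{\mathsf{LTS}}=0$, $[\hat\psi,\hat\mu_2]_{\mathsf{LTS}}=0$, $\frac12[\hat\mu_2,\hat\mu_2]_{\mathsf{LTS}}=0$.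
   Context: All vector spaces are over a field of characteristic $0$. A Lie triple system is a vector space with a trilinear bracket satisfying $[x,x,y]=0$, $[x,y,z]+[y,z,x]+[z,x,y]=0$ and $[x,y,[z,w,t]]=[[x,y,z],w,t]+[z,[x,y,w],t]+[z,w,[x,y,t]]$; a twilled Lie triple system is a Lie triple system on $\mathcal G=\mathfrak g_1\oplus\mathfrak g_2$ in which $\mathfrak g_1$ and $\mathfrak g_2$ are subalgebras. Cochains: $C^p(\mathcal G,\mathcal G)=\mathrm{Hom}(\otimes^{2p+1}\mathcal G,\mathcal G)$, arguments $(\mathfrak X_1,\dots,\mathfrak X_p,x)$, $\mathfrak X_i=x_i\otimes y_i$; for $P\in C^p,Q\in C^q$, $(P\circ Q)(\mathfrak X_1,\dots,\mathfrak X_{p+q},x)=\sum_{k=1}^p(-1)^{(k-1)q}\sum_{\sigma\in\mathbb S(k-1,q)}(-1)^\sigma P(\mathfrak X_{\sigma(1)},\dots,\mathfrak X_{\sigma(k-1)},Q(\mathfrak X_{\sigma(k)},\dots,\mathfrak X_{\sigma(k+q-1)},x_{k+q})\otimes y_{k+q},\mathfrak X_{k+q+1},\dots,x)+\sum_{k=1}^p(-1)^{(k-1)q}\sum_{\sigma\in\mathbb S(k-1,q)}(-1)^\sigma P(\mathfrak X_{\sigma(1)},\dots,\mathfrak X_{\sigma(k-1)},x_{k+q}\otimes Q(\mathfrak X_{\sigma(k)},\dots,\mathfrak X_{\sigma(k+q-1)},y_{k+q}),\mathfrak X_{k+q+1},\dots,x)+\sum_{\sigma\in\mathbb S(p,q)}(-1)^\sigma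 P(\mathfrak X_{\sigma(1)},\dots,\mathfrak X_{\sigma(p)},Q(\mathfrak X_{\sigma(p+1)},\dots,\mathfrak X_{\sigma(p+q)},x))$, $[P,Q]=P\circ Q-(-1)^{pq}Q\circ P$. $C^p_{\mathsf{LTS}}$ is the subspace of $P$ with $P(\dots,x,x,y)=0$ and vanishing cyclic sum in the last three slots; bracket $[\cdot,\cdot]_{\mathsf{LTS}}$. $\Theta\in C^1_{\mathsf{LTS}}$ is a Lie triple system bracket iff $[\Theta,\Theta]_{\mathsf{LTS}}=0$. Decomposition: with $[a,b,c]_i$ the $\mathfrak g_i$-component of $\Theta(a,b,c)$, $x,y,z\in\mathfrak g_1$, $u,v,w\in\mathfrak g_2$: $\hat\phi_1((x,u),(y,v),(z,w))=(0,[x,y,z]_2)$; $\hat\mu_1=([x,y,z]_1,[x,y,w]_2+[u,y,z]_2-[v,x,z]_2)$; $\hat\psi=([x,y,w]_1+[u,y,z]_1-[v,x,z]_1,[u,v,z]_2+[x,v,w]_2-[y,u,w]_2)$; $\hat\mu_2=([u,v,z]_1+[x,v,w]_1-[y,u,w]_1,[u,v,w]_2)$; $\hat\phi_2=([u,v,w]_1,0)$. *)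

From HB Require Import structures.
From mathcomp Require Import all_boot all_order all_algebra.
Set Implicit Arguments. Unset Strict Implicit. Unset Printing Implicit Defensive.
Import Order.TTheory GRing.Theory Num.Theory.
Local Open Scope ring_scope.

Section LTS.
Variable R : fieldType.

Section Bracket.
Variable V : lmodType R.

Definition trilinear (T : V -> V -> V -> V) : Prop :=
  [/\ forall (a : R) x x' y z, T (a *: x + x') y z = a *: T x y z + T x' y z,
      forall (a : R) x y y' z, T x (a *: y + y') z = a *: T x y z + T x y' z &
      forall (a : R) x y z z', T x y (a *: z + z') = a *: T x y z + T x y z'].

Definition is_LTS (T : V -> V -> V -> V) : Prop :=
  [/\ trilinear T,
      forall x y, T x x y = 0,
      forall x y z, T x y z + T y z x + T z x y = 0 &
      forall x y z w t,
        T x y (T z w t) = T (T x y z) w t + T z (T x y w) t + T z w (T x y t)].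

Definition in_C1_LTS (T : V -> V -> V -> V) : Prop :=
  [/\ trilinear T,
      forall x y, T x x y = 0 &
      forall x y z, T x y z + T y z x + T z x y = 0].

(* A cochain P in C^p(V,V) is a function of (X_1,...,X_p, x) where each
   X_i = x_i (x) y_i is represented by the pair (x_i, y_i). *)
Definition cochain := seq (V * V) -> V -> V.

Fixpoint bseqs (n : nat) : seq (seq bool) :=
  if n is n'.+1 then [seq true :: s | s <- bseqs n'] ++ [seq false :: s | s <- bseqs n']
  else [:: [::]].

(* A shuffle sigma in S(i,j) of positions 0..i+j-1 is encoded by the mask m
   (length i+j, i trues): sigma(1..i) = positions of trues (increasing),
   sigma(i+1..i+j) = positions of falses (increasing).  Its number of
   inversions is the number of pairs (false at a, true at b) with a < b. *)
Fixpoint shinv (m : seq bool) : nat :=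
  if m is b :: m' then (if b then 0%N else count id m') + shinv m' else 0%N.

Definition shsign (m : seq bool) : R := (-1) ^+ shinv m.

(* P o Q for P in C^p, Q in C^q, evaluated on (X_1,...,X_{p+q}, x).
   The summation index k of the paper is k.+1 here (k : 'I_p).
   NOTE: the factor (-1)^(p*q) on the last sum. *)
Definition comp (p q : nat) (P Q : cochain) : cochain := fun Xs x =>
  \sum_(k < p) (-1) ^+ (k * q) *:
     \sum_(m <- bseqs (k + q) | count id m == k)
        shsign m *:
        (let pre := take (k + q) Xs in
         let X := nth (0, 0) Xs (k + q) in
         let post := drop (k + q).+1 Xs in
         P (mask m pre ++ (Q (mask (map negb m) pre) X.1, X.2) :: post) x
       + P (mask m pre ++ (X.1, Q (mask (map negb m) pre) X.2) :: post) x)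
  + (-1) ^+ (p * q) *:
     \sum_(m <- bseqs (p + q) | count id m == p)
        shsign m *: P (mask m Xs) (Q (mask (map negb m) Xs) x).

Definition bracket (p q : nat) (P Q : cochain) : cochain := fun Xs x =>
  comp p q P Q Xs x - (-1) ^+ (p * q) *: comp q p Q P Xs x.

(* [.,.]_LTS is the restriction of [.,.] to the LTS cochains *)
Definition bracketLTS := bracket.

Definition cochain1 (T : V -> V -> V -> V) : cochain := fun Xs x =>
  T (head (0, 0) Xs).1 (head (0, 0) Xs).2 x.

Definition cadd (P Q : cochain) : cochain := fun Xs x => P Xs x + Q Xs x.

Definition C2_zero (F : cochain) : Prop :=
  forall X1 X2 : V * V, forall x : V, F [:: X1; X2] x = 0.

End Bracket.

Section Decomp.
Variables g1 g2 : lmodType R.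
Local Notation G := (g1 * g2)%type.
Variable T : G -> G -> G -> G.

Definition in1 (x : g1) : G := (x, 0).
Definition in2 (u : g2) : G := (0, u).
Definition br1 a b c : g1 := (T a b c).1.
Definition br2 a b c : g2 := (T a b c).2.

Definition hphi1 (A B C : G) : G :=
  let: (x, u) := A in let: (y, v) := B in let: (z, w) := C in
  (0, br2 (in1 x) (in1 y) (in1 z)).
Definition hmu1 (A B C : G) : G :=
  let: (x, u) := A in let: (y, v) := B in let: (z, w) := C in
  (br1 (in1 x) (in1 y) (in1 z),
   br2 (in1 x) (in1 y) (in2 w) + br2 (in2 u) (in1 y) (in1 z)
     - br2 (in2 v) (in1 x) (in1 z)).
Definition hpsi (A B C : G) : G :=
  let: (x, u) := A in let: (y, v) := B in let: (z, w) := C in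
  (br1 (in1 x) (in1 y) (in2 w) + br1 (in2 u) (in1 y) (in1 z)
     - br1 (in2 v) (in1 x) (in1 z),
   br2 (in2 u) (in2 v) (in1 z) + br2 (in1 x) (in2 v) (in2 w)
     - br2 (in1 y) (in2 u) (in2 w)).
Definition hmu2 (A B C : G) : G :=
  let: (x, u) := A in let: (y, v) := B in let: (z, w) := C in
  (br1 (in2 u) (in2 v) (in1 z) + br1 (in1 x) (in2 v) (in2 w)
     - br1 (in1 y) (in2 u) (in2 w),
   br2 (in2 u) (in2 v) (in2 w)).
Definition hphi2 (A B C : G) : G :=
  let: (x, u) := A in let: (y, v) := B in let: (z, w) := C in
  (br1 (in2 u) (in2 v) (in2 w), 0).

End Decomp.
End LTS.

From Pilot Require Import Defs.
From HB Require Import structures.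
From mathcomp Require Import all_boot all_order all_algebra zify.
Import GRing.Theory.
Local Open Scope ring_scope.

(* Rescale g2 by t: sigma_t (x, u) = (x, t u).  Because phi1 = phi2 = 0,
   sigma_t^-1 Theta (sigma_t _, sigma_t _, sigma_t _) = mu1 + t psi + t^2 mu2.
   Theta is a Lie triple system iff the defect [circ Theta Theta] of the
   fundamental identity vanishes, i.e. 1/2 [Theta, Theta] = 0.  Conjugated by
   sigma_t, this defect is a polynomial of degree 4 in t whose coefficients are
   the five expressions of the statement; in characteristic 0 the nodes
   t = 1, ..., 5 are distinct, so inverting a Vandermonde matrix shows that the
   defect vanishes iff every coefficient does.  The same interpolation shows
   that mu1, psi and mu2 are trilinear, being linear combinations of the
   trilinear maps sigma_t^-1 Theta sigma_t. *)

Set Implicit Arguments. Unset Strict Implicit.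

Section LinearMap.
Variables (R : fieldType) (U W : lmodType R) (f : U -> W).
Hypothesis f_lin : linear f.

Lemma linmapD x y : f (x + y) = f x + f y.
Proof. by rewrite -[x in LHS]scale1r f_lin scale1r. Qed.
Lemma linmapZ a x : f (a *: x) = a *: f x. Proof. exact: scalable_linear. Qed.
Lemma linmap0 : f 0 = 0. Proof. by rewrite -(scale0r (0 : U)) linmapZ scale0r. Qed.
Lemma linmapN x : f (- x) = - f x. Proof. by rewrite -scaleN1r linmapZ scaleN1r. Qed.

Lemma linmap_sum n (c : 'I_n -> R) (w : 'I_n -> U) :
  f (\sum_(j < n) c j *: w j) = \sum_(j < n) c j *: f (w j).
Proof.
elim: n c w => [|n IH] c w; first by rewrite !big_ord0 linmap0.
by rewrite !big_ord_recr linmapD linmapZ IH.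
Qed.

End LinearMap.

Section Trilinear.
Variables (R : fieldType) (V : lmodType R) (T : V -> V -> V -> V).
Hypothesis T_tri : trilinear T.

Let lin1 y z : linear (fun x => T x y z).
Proof. by case: T_tri => H _ _ a x x'; apply: H. Qed.
Let lin2 x z : linear (fun y => T x y z).
Proof. by case: T_tri => _ H _ a y y'; apply: H. Qed.
Let lin3 x y : linear (T x y).
Proof. by case: T_tri => _ _ H a z z'; apply: H. Qed.

Lemma trilinearDl x x' y z : T (x + x') y z = T x y z + T x' y z.
Proof. exact: linmapD (lin1 y z) x x'. Qed.
Lemma trilinearDm x y y' z : T x (y + y') z = T x y z + T x y' z.
Proof. exact: linmapD (lin2 x z) y y'. Qed.
Lemma trilinearDr x y z z' : T x y (z + z') = T x y z + T x y z'.
Proof. exact: linmapD (lin3 x y) z z'. Qed.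
Lemma trilinearZl a x y z : T (a *: x) y z = a *: T x y z.
Proof. exact: linmapZ (lin1 y z) a x. Qed.
Lemma trilinearZm a x y z : T x (a *: y) z = a *: T x y z.
Proof. exact: linmapZ (lin2 x z) a y. Qed.
Lemma trilinearZr a x y z : T x y (a *: z) = a *: T x y z.
Proof. exact: linmapZ (lin3 x y) a z. Qed.

Lemma trilinear_suml n (c : 'I_n -> R) w y z :
  T (\sum_(j < n) c j *: w j) y z = \sum_(j < n) c j *: T (w j) y z.
Proof. exact: linmap_sum (lin1 y z) n c w. Qed.
Lemma trilinear_summ n (c : 'I_n -> R) w x z :
  T x (\sum_(j < n) c j *: w j) z = \sum_(j < n) c j *: T x (w j) z.
Proof. exact: linmap_sum (lin2 x z) n c w. Qed.
Lemma trilinear_sumr n (c : 'I_n -> R) w x y :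
  T x y (\sum_(j < n) c j *: w j) = \sum_(j < n) c j *: T x y (w j).
Proof. exact: linmap_sum (lin3 x y) n c w. Qed.

End Trilinear.

Section TrilinearClosure.
Variables (R : fieldType) (V : lmodType R).
Implicit Types P Q : V -> V -> V -> V.

Lemma trilinear_eq P Q : (forall a b d, P a b d = Q a b d) -> trilinear Q -> trilinear P.
Proof. by move=> E [H1 H2 H3]; split=> *; rewrite !E ?H1 ?H2 ?H3. Qed.

Lemma trilinear_lincomb n (c : 'I_n -> R) (Q : 'I_n -> V -> V -> V -> V) :
  (forall m, trilinear (Q m)) ->
  trilinear (fun a b d => \sum_(m < n) c m *: Q m a b d).
Proof.
move=> Q_tri; split=> a *; rewrite scaler_sumr -big_split /=; apply: eq_bigr => m _.
- by rewrite trilinearDl ?trilinearZl // scalerDr !scalerA mulrC.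
- by rewrite trilinearDm ?trilinearZm // scalerDr !scalerA mulrC.
- by rewrite trilinearDr ?trilinearZr // scalerDr !scalerA mulrC.
Qed.

End TrilinearClosure.

Section Circ.
Variables (R : fieldType) (V : lmodType R).
Implicit Types P Q T : V -> V -> V -> V.

Definition circ P Q a1 b1 a2 b2 c : V :=
  P (Q a1 b1 a2) b2 c + P a2 (Q a1 b1 b2) c - P a1 b1 (Q a2 b2 c) + P a2 b2 (Q a1 b1 c).

Lemma comp11_cochain1 P Q a1 b1 a2 b2 c :
  Defs.comp 1 1 (cochain1 P) (cochain1 Q) [:: (a1, b1); (a2, b2)] c = circ P Q a1 b1 a2 b2 c.
Proof.
rewrite /Defs.comp big_ord1 !big_cons big_nil /= /shsign /cochain1 /=.
by rewrite !expr0 !expr1 !scale1r !scaleN1r big_nil !addr0 opprD opprK addrA.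
Qed.

Lemma bracket11_cochain1 P Q a1 b1 a2 b2 c :
  bracket 1 1 (cochain1 P) (cochain1 Q) [:: (a1, b1); (a2, b2)] c =
  circ P Q a1 b1 a2 b2 c + circ Q P a1 b1 a2 b2 c.
Proof. by rewrite /bracket !comp11_cochain1 expr1 scaleN1r opprK. Qed.

Lemma is_LTS_circ T :
  in_C1_LTS T -> is_LTS T <-> forall a1 b1 a2 b2 c, circ T T a1 b1 a2 b2 c = 0.
Proof.
case=> T_tri T_alt T_cyc; rewrite /circ; split=> [[_ _ _ T_fund] a1 b1 a2 b2 c | T_fund].
  by rewrite addrAC (T_fund a1 b1 a2 b2 c) subrr.
by split=> // x y z w t; apply/eqP; rewrite eq_sym -subr_eq0 addrAC T_fund.
Qed.

Definition psum n (t : R) (P : nat -> V -> V -> V -> V) a b c : V :=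
  \sum_(i < n) t ^+ i *: P i a b c.

Lemma circ_psum n t (P : nat -> V -> V -> V -> V) a1 b1 a2 b2 c :
  (forall i, trilinear (P i)) ->
  circ (psum n t P) (psum n t P) a1 b1 a2 b2 c =
  \sum_(i < n) \sum_(j < n) t ^+ (i + j) *: circ (P i) (P j) a1 b1 a2 b2 c.
Proof.
move=> P_tri; rewrite /circ /psum.
under eq_bigr => i _ do rewrite (trilinear_suml (P_tri i)) scaler_sumr.
under [X in _ + X - _ + _ = _]eq_bigr => i _ do rewrite (trilinear_summ (P_tri i)) scaler_sumr.
under [X in _ + _ - X + _ = _]eq_bigr => i _ do rewrite (trilinear_sumr (P_tri i)) scaler_sumr.
under [X in _ + _ - _ + X = _]eq_bigr => i _ do rewrite (trilinear_sumr (P_tri i)) scaler_sumr.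
rewrite -!sumrN -!big_split /=; apply: eq_bigr => i _.
rewrite -!sumrN -!big_split /=; apply: eq_bigr => j _.
by rewrite exprD -!scalerA !scalerDr !scalerN.
Qed.

Lemma sum_pow_addn n (X : 'I_n -> 'I_n -> V) (t : R) :
  \sum_(i < n) \sum_(j < n) t ^+ (i + j) *: X i j =
  \sum_(k < (n + n).-1) t ^+ k *: \sum_(i < n) \sum_(j < n | (i + j == k)%N) X i j.
Proof.
symmetry; under eq_bigr => k _ do rewrite scaler_sumr.
under eq_bigr => k _ do under eq_bigr => i _ do rewrite scaler_sumr big_mkcond /=.
rewrite exchange_big /=; apply: eq_bigr => i _.
rewrite exchange_big /=; apply: eq_bigr => j _.
have lt_ij : (i + j < (n + n).-1)%N by have := ltn_ord i; have := ltn_ord j; lia.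
rewrite (bigD1 (Ordinal lt_ij)) //= eqxx big1 ?addr0 // => k.
by rewrite -val_eqE /= eq_sym => /negbTE ->.
Qed.

Lemma vandermonde_inversion n (t : 'I_n -> R) : injective t ->
  exists a : 'M[R]_n, forall (v : 'I_n -> V) i,
    v i = \sum_(m < n) a i m *: \sum_(k < n) t m ^+ k *: v k.
Proof.
move=> t_inj; pose W := (Vandermonde n (\row_m t m))^T.
have W_unit : W \in unitmx.
  rewrite unitmxE det_tr det_Vandermonde unitfE prodf_seq_neq0.
  apply/allP => i _; rewrite prodf_seq_neq0; apply/allP => j _ /=.
  apply/implyP => lt_ij; rewrite !mxE subr_eq0.
  by apply: contraTneq lt_ij => /t_inj ->; rewrite ltnn.
exists (invmx W) => v i.
under eq_bigr => m _ do rewrite scaler_sumr.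
rewrite exchange_big /=.
under eq_bigr => k _ do under eq_bigr => m _ do rewrite scalerA.
have invW_W (k : 'I_n) : \sum_(m < n) invmx W i m * t m ^+ k = (invmx W *m W) i k.
  by rewrite !mxE; apply: eq_bigr => m _; rewrite !mxE.
under eq_bigr => k _ do rewrite -scaler_suml invW_W.
rewrite mulVmx // (bigD1 i) //= big1 ?addr0; first by rewrite mxE eqxx scale1r.
by move=> k /negbTE k_i; rewrite mxE eq_sym k_i scale0r.
Qed.

Lemma power_sums_eq0 n (t : 'I_n -> R) (v : 'I_n -> V) : injective t ->
  (forall m, \sum_(k < n) t m ^+ k *: v k = 0) -> forall i, v i = 0.
Proof.
move=> /vandermonde_inversion [a a_inv] v_eq0 i.
by rewrite a_inv big1 // => m _; rewrite v_eq0 scaler0.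
Qed.

End Circ.

Definition node {R : fieldType} {n : nat} (m : 'I_n) : R := m.+1%:R.

Section CharZero.
Variable R : fieldType.
Hypothesis R_char0 : [pchar R] =i pred0.

Lemma natf_inj : injective (fun n : nat => n%:R : R).
Proof.
have natf_eq0 n : (n%:R == 0 :> R) = (n == 0)%N by rewrite (pcharf0P _).1.
move=> m n /= E; wlog le_mn : m n E / (m <= n)%N => [hwlog|].
  case/orP: (leq_total m n) => [|le_nm]; first exact: hwlog.
  exact/esym/(hwlog n m (esym E)).
apply/eqP; rewrite eqn_leq le_mn /= -subn_eq0 -natf_eq0 natrB //.
by rewrite E subrr.
Qed.

Lemma node_inj n : injective (@node R n).
Proof. by move=> i j /natf_inj [] /val_inj. Qed.

Lemma node_neq0 n (m : 'I_n) : node m != 0 :> R.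
Proof. by rewrite /node (pcharf0P _).1. Qed.

Lemma half_double (V : lmodType R) (v : V) : 2^-1 *: (v + v) = v.
Proof. by rewrite -mulr2n -scaler_nat scalerA mulVf ?scale1r // (pcharf0P _).1. Qed.

End CharZero.

Section Twilled.
Variables (R : fieldType) (g1 g2 : lmodType R).
Local Notation G := (g1 * g2)%type.
Local Notation in1 := (@in1 R g1 g2).
Local Notation in2 := (@in2 R g1 g2).
Variable Theta : G -> G -> G -> G.
Hypothesis Theta_C1 : in_C1_LTS Theta.
Hypothesis hphi1_eq0 : forall A B C, hphi1 Theta A B C = 0.
Hypothesis hphi2_eq0 : forall A B C, hphi2 Theta A B C = 0.

Let Theta_tri : trilinear Theta. Proof. by case: Theta_C1. Qed.

Lemma Theta_skew A B C : Theta A B C = - Theta B A C.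
Proof.
case: Theta_C1 => _ Theta_alt _; apply/eqP; rewrite -addr_eq0.
have := Theta_alt (A + B) C.
by rewrite trilinearDl // !trilinearDm // !Theta_alt add0r addr0 => ->.
Qed.

Lemma g1_subalgebra x y z : (Theta (in1 x) (in1 y) (in1 z)).2 = 0.
Proof. by have [] := hphi1_eq0 (x, 0) (y, 0) (z, 0). Qed.

Lemma g2_subalgebra u v w : (Theta (in2 u) (in2 v) (in2 w)).1 = 0.
Proof. by have [] := hphi2_eq0 (0, u) (0, v) (0, w). Qed.

Definition rescale (t : R) (A : G) : G := (A.1, t *: A.2).

Lemma rescale_linear t : linear (rescale t).
Proof.
move=> a [x u] [y w]; apply: injective_projections => //=.
by rewrite scalerDr !scalerA mulrC.
Qed.

Lemma rescaleK t : t != 0 -> cancel (rescale t) (rescale t^-1).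
Proof. by move=> t_neq0 [x u]; rewrite /rescale /= scalerA mulVf // scale1r. Qed.

Lemma rescale1 A : rescale 1 A = A.
Proof. by case: A => x u; rewrite /rescale /= scale1r. Qed.

Lemma rescale_in t x u : rescale t (x, u) = in1 x + t *: in2 u.
Proof. by apply: injective_projections; rewrite /= ?scaler0 ?addr0 ?add0r. Qed.

Definition hpart (k : nat) : G -> G -> G -> G :=
  match k with 0 => hmu1 Theta | 1 => hpsi Theta | _ => hmu2 Theta end.

Lemma Theta_rescale t A B C :
  Theta (rescale t A) (rescale t B) (rescale t C) = rescale t (psum 3 t hpart A B C).
Proof.
case: A => x u; case: B => y v; case: C => z w.
rewrite !rescale_in /psum !big_ord_recr big_ord0 /= add0r expr0 expr1 scale1r.
rewrite !(trilinearDl Theta_tri, trilinearDm Theta_tri, trilinearDr Theta_tri).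
rewrite !(trilinearZl Theta_tri, trilinearZm Theta_tri, trilinearZr Theta_tri).
rewrite /hmu1 /hpsi /hmu2 /br1 /br2 (Theta_skew (in2 v) (in1 x)) (Theta_skew (in1 y) (in2 u)).
apply: injective_projections; rewrite /= ?g1_subalgebra ?g2_subalgebra.
all: rewrite !opprK ?scaler0 ?addr0 ?add0r !scalerDr !scalerA ?expr2 -?mulrA !addrA.
  by rewrite [LHS](ACl (1*2*5*3*7*4*6)).
by rewrite [LHS](ACl (1*4*2*6*3*5*7)).
Qed.

Lemma psum_hpart_trilinear t : t != 0 -> trilinear (psum 3 t hpart).
Proof.
move=> t_neq0.
apply: (trilinear_eq
  (Q := fun A B C => rescale t^-1 (Theta (rescale t A) (rescale t B) (rescale t C)))).
  by move=> A B C; rewrite Theta_rescale rescaleK.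
have [lin_t lin_tV] := (rescale_linear t, rescale_linear t^-1).
by case: Theta_tri => T1 T2 T3; split=> *; rewrite !lin_t ?T1 ?T2 ?T3 lin_tV.
Qed.

Hypothesis R_char0 : [pchar R] =i pred0.

Lemma hpart_trilinear k : trilinear (hpart k).
Proof.
have [a a_inv] := vandermonde_inversion G (@node_inj _ R_char0 3).
have part_tri (i : 'I_3) : trilinear (hpart i).
  apply: (trilinear_eq (Q := fun A B C => \sum_(m < 3) a i m *: psum 3 (node m) hpart A B C)).
    by move=> A B C; rewrite (a_inv (fun j : 'I_3 => hpart j A B C)).
  by apply: trilinear_lincomb => m; apply/psum_hpart_trilinear/node_neq0.
by case: k => [|[|k]]; [apply: (part_tri 0) | apply: (part_tri 1) | apply: (part_tri 2)].
Qed.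

Definition circ_coef a1 b1 a2 b2 c k : G :=
  \sum_(i < 3) \sum_(j < 3 | (i + j == k)%N) circ (hpart i) (hpart j) a1 b1 a2 b2 c.

Lemma circ_rescale t a1 b1 a2 b2 c :
  circ Theta Theta (rescale t a1) (rescale t b1) (rescale t a2) (rescale t b2) (rescale t c) =
  rescale t (\sum_(k < 5) t ^+ k *: circ_coef a1 b1 a2 b2 c k).
Proof.
rewrite -(sum_pow_addn (fun i j : 'I_3 => circ (hpart i) (hpart j) a1 b1 a2 b2 c)).
rewrite -circ_psum; last exact: hpart_trilinear.
have lin := rescale_linear t.
by rewrite /circ !Theta_rescale -!(linmapN lin) -!(linmapD lin).
Qed.

Lemma is_LTS_circ_coef :
  is_LTS Theta <-> forall a1 b1 a2 b2 c k, (k < 5)%N -> circ_coef a1 b1 a2 b2 c k = 0.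
Proof.
rewrite (is_LTS_circ Theta_C1); split=> [circ_eq0 a1 b1 a2 b2 c k lt_k5 | coef_eq0 a1 b1 a2 b2 c].
  pose v (k : 'I_5) := circ_coef a1 b1 a2 b2 c k.
  apply: (@power_sums_eq0 _ _ _ node v (@node_inj _ R_char0 5) _ (Ordinal lt_k5)) => m.
  by rewrite -[LHS](rescaleK (node_neq0 R_char0 m)) -circ_rescale circ_eq0 /rescale /= scaler0.
have := circ_rescale 1 a1 b1 a2 b2 c; rewrite !rescale1 => ->.
by rewrite big1 // => k _; rewrite coef_eq0 ?scaler0.
Qed.

Local Notation mu1 := (cochain1 (hmu1 Theta)).
Local Notation psi := (cochain1 (hpsi Theta)).
Local Notation mu2 := (cochain1 (hmu2 Theta)).

Lemma circ_coef_bracket a1 b1 a2 b2 c (Xs := [:: (a1, b1); (a2, b2)]) :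
  [/\ circ_coef a1 b1 a2 b2 c 0 = 2^-1 *: bracketLTS 1 1 mu1 mu1 Xs c,
      circ_coef a1 b1 a2 b2 c 1 = bracketLTS 1 1 psi mu1 Xs c,
      circ_coef a1 b1 a2 b2 c 2 =
        bracketLTS 1 1 mu1 mu2 Xs c + 2^-1 *: bracketLTS 1 1 psi psi Xs c,
      circ_coef a1 b1 a2 b2 c 3 = bracketLTS 1 1 psi mu2 Xs c &
      circ_coef a1 b1 a2 b2 c 4 = 2^-1 *: bracketLTS 1 1 mu2 mu2 Xs c].
Proof.
rewrite /bracketLTS /Xs !bracket11_cochain1 !half_double //.
split; rewrite /circ_coef; under eq_bigr => i _ do rewrite big_mkcond /=.
all: rewrite !big_ord_recr !big_ord0 /= ?add0r ?addr0 //.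
  by rewrite addrC.
by rewrite addrAC.
Qed.

End Twilled.

Theorem proposition3p14 (R : fieldType) (charR0 : [pchar R] =i pred0)
    (g1 g2 : lmodType R) (Theta : (g1 * g2)%type -> (g1 * g2)%type -> (g1 * g2)%type -> (g1 * g2)%type) :
  in_C1_LTS Theta ->
  (forall A B C, hphi1 Theta A B C = 0) ->
  (forall A B C, hphi2 Theta A B C = 0) ->
  let mu1 := cochain1 (hmu1 Theta) in
  let psi := cochain1 (hpsi Theta) in
  let mu2 := cochain1 (hmu2 Theta) in
  is_LTS Theta <->
  [/\ C2_zero (fun Xs x => 2^-1 *: bracketLTS 1 1 mu1 mu1 Xs x),
      C2_zero (bracketLTS 1 1 psi mu1),
      C2_zero (fun Xs x => bracketLTS 1 1 mu1 mu2 Xs x + 2^-1 *: bracketLTS 1 1 psi psi Xs x),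
      C2_zero (bracketLTS 1 1 psi mu2) &
      C2_zero (fun Xs x => 2^-1 *: bracketLTS 1 1 mu2 mu2 Xs x)].
Proof.
move=> Theta_C1 hphi1_eq0 hphi2_eq0 mu1 psi mu2.
have coef_bracket := circ_coef_bracket Theta charR0.
rewrite (is_LTS_circ_coef Theta_C1 hphi1_eq0 hphi2_eq0 charR0).
split=> [coef_eq0 | [h0 h1 h2 h3 h4] a1 b1 a2 b2 c k].
  split=> -[a1 b1] [a2 b2] c; have [e0 e1 e2 e3 e4] := coef_bracket a1 b1 a2 b2 c.
  - by rewrite /= -e0 coef_eq0.
  - by rewrite -e1 coef_eq0.
  - by rewrite /= -e2 coef_eq0.
  - by rewrite -e3 coef_eq0.
  - by rewrite /= -e4 coef_eq0.
have [e0 e1 e2 e3 e4] := coef_bracket a1 b1 a2 b2 c.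
case: k => [|[|[|[|[|k]]]]] // _.
- by rewrite e0 h0.
- by rewrite e1 h1.
- by rewrite e2 h2.
- by rewrite e3 h3.
- by rewrite e4 h4.
Qed.
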